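(* Let $(V,\{A,B\})$ be a forking problem with a monotonic profile. The assignments returned by $R_A$ and $R_B$ (described in the context) coincide if and only if the profile admits a unique stable assignment.
   Context: Agents $V=\{v_1,\dots,v_n\}$; two alternatives $A,B$. Each agent $v_i$ has a strict total order $\succ_i$ on $\{A,B\}\times\{1,\dots,n\}$, where $(S,j)$ means being in the community adopting $S$ of size $j$; it is monotonic if $(S,j)\succ_i(S,k)$ whenever $k<j$. An assignment is a map $f:V\to\{A,B\}$; $v_i$ prefers $f$ to $g$ if $(f(v_i),|f^{-1}(f(v_i))|)\succ_i(g(v_i),|g^{-1}(g(v_i))|)$. An assignment $f$ is stable if there is no assignment $f'\neq f$ such that every agent $v_i$ with $f'(v_i)\neq f(v_i)$ prefers $f'$ to $f$. Algorithm $R_A$: set $V_A=V$, $V_B=\emptyset$, $a=|V_A|$, $b=|V_B|$. Repeat: let $k$ be the largest $j\in\{1,\dots,a\}$ with $|\{v_i\in V_A:(B,b+j)\succ_i(A,a)\}|\ge j$, or $k=0$ if none exists. If $k=0$, output $f$ with $f^{-1}(A)=V_A$, $f^{-1}(B)=V_B$. Otherwise let $X=\{v_i\in V_A:(B,b+k)\succ_i(A,a)\}$, move $X$ from $V_A$ to $V_B$, update $a,b$, and repeat. Algorithm $R_B$ is the same with the roles of $A$ and $B$ exchanged (it starts with all agents at $B$ and moves groups to $A$). *)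

From HB Require Import structures.
From mathcomp Require Import all_boot.
Set Implicit Arguments. Unset Strict Implicit. Unset Printing Implicit Defensive.

Inductive alt := A | B.
Definition alt2bool (a : alt) : bool := if a is A then true else false.
Definition bool2alt (b : bool) : alt := if b then A else B.
Lemma alt2boolK : cancel alt2bool bool2alt. Proof. by case. Qed.
HB.instance Definition _ := Finite.copy alt (can_type alt2boolK).

Definition other (S : alt) : alt := if S is A then B else A.

(* Agents are 'I_n; a preference of an agent is a relation on pairs
   (alternative, community size); only sizes 1..n are meaningful. *)
Definition dom (n : nat) (x : alt * nat) : bool := (0 < x.2) && (x.2 <= n).

Definition strict_total_order (n : nat) (r : rel (alt * nat)) : Prop :=
  [/\ {in dom n, forall x, ~~ r x x},
      {in dom n & &, forall y x z, r x y -> r y z -> r x z}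
    & {in dom n &, forall x y, x != y -> r x y || r y x}].

Definition monotonic (n : nat) (r : rel (alt * nat)) : Prop :=
  forall (S : alt) (j k : nat), 0 < k -> k < j -> j <= n -> r (S, j) (S, k).

Definition assignment (n : nat) := {ffun 'I_n -> alt}.

Definition comm_size n (f : assignment n) (i : 'I_n) : nat :=
  #|[set j | f j == f i]|.

Definition point n (f : assignment n) (i : 'I_n) : alt * nat :=
  (f i, comm_size f i).

Definition prefers n (pref : 'I_n -> rel (alt * nat)) (i : 'I_n)
  (f g : assignment n) : bool := pref i (point f i) (point g i).

Definition stable n (pref : 'I_n -> rel (alt * nat)) (f : assignment n) : Prop :=
  ~ exists f' : assignment n,
      f' != f /\ forall i, f' i != f i -> prefers pref i f' f.

(* One round of algorithm R_S: V_S = f^-1(S), V_T = f^-1(T), T = other S. *)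
Section Alg.
Variables (n : nat) (pref : 'I_n -> rel (alt * nat)) (S : alt).

Definition cnt (f : assignment n) (X : alt) : nat := #|[set i | f i == X]|.

Definition cand (f : assignment n) (j : nat) : {set 'I_n} :=
  [set i | (f i == S) && pref i (other S, cnt f (other S) + j) (S, cnt f S)].

Definition kmax (f : assignment n) : nat :=
  \max_(j < (cnt f S).+1 | (0 < j) && (j <= #|cand f j|)) j.

Definition step (f : assignment n) : assignment n :=
  if kmax f == 0 then f
  else [ffun i => if i \in cand f (kmax f) then other S else f i].

(* Start with everybody at S; each nontrivial round moves >= 1 agent,
   so after n.+1 rounds the algorithm has stopped (step is the identity
   at termination). *)
Definition R : assignment n := iter n.+1 step [ffun => S].
End Alg.

From mathcomp Require Import all_boot zify.
Set Implicit Arguments. Unset Strict Implicit. Unset Printing Implicit Defensive.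

(* Write T for the alternative other than S.  R_S moves a group X from S to T
   only when every member prefers (T, |V_T| + |X|) to its current (S, |V_S|).
   If a stable f had every agent R_S already sent to T at T, but kept some
   members of X at S, then by monotonicity moving those members to T would be a
   deviation from f.  So every stable f puts at T all agents R_S puts there.
   Conversely R_S is stable.  No deviation sends agents back to S: among the
   returning agents, the one that left first left an S-community at least as
   large as the one they would form, and had preferred T to it.  And a
   deviation moving agents only from S to T would have given the last round of
   R_S a positive k.  Hence if R_A = R_B, every stable f agrees with it. *)

Section Preference.
Variables (n : nat) (r : rel (alt * nat)).
Hypotheses (r_order : strict_total_order n r) (r_mono : monotonic n r).

Lemma pref_trans x y z : 0 < x.2 <= n -> 0 < y.2 <= n -> 0 < z.2 <= n ->
  r x y -> r y z -> r x z.
Proof. by case: r_order => _ tr _ hx hy hz; apply: (tr y x z). Qed.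

Lemma pref_asym x y : 0 < x.2 <= n -> 0 < y.2 <= n -> r x y -> ~~ r y x.
Proof.
case: (r_order) => irr _ _ hx hy rxy; apply/negP => ryx.
by have := irr x hx; rewrite (pref_trans hx hy hx rxy ryx).
Qed.

Lemma pref_monoL (X : alt) k j z : 0 < k <= j -> j <= n -> 0 < z.2 <= n ->
  r (X, k) z -> r (X, j) z.
Proof.
move=> kj jn hz rkz; have [<- //|neq_kj] := eqVneq k j.
by apply: (pref_trans (y := (X, k))) => //=; [lia | lia | apply: r_mono; lia].
Qed.

Lemma pref_monoR (X : alt) k j z : 0 < k <= j -> j <= n -> 0 < z.2 <= n ->
  r z (X, j) -> r z (X, k).
Proof.
move=> kj jn hz rzj; have [-> //|neq_kj] := eqVneq k j.
by apply: (pref_trans (y := (X, j))) => //=; [lia | lia | apply: r_mono; lia].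
Qed.

End Preference.

Lemma other_neq (S : alt) : (other S == S) = false.
Proof. by case: S. Qed.

Lemma alt_or_other (S x : alt) : x = S \/ x = other S.
Proof. by case: S; case: x; auto. Qed.

Section Counting.
Variable n : nat.
Implicit Types (f g : assignment n) (X : alt) (D : {set 'I_n}).

Lemma cnt_other f S : cnt f S + cnt f (other S) = n.
Proof.
rewrite /cnt; have -> : [set i | f i == other S] = ~: [set i | f i == S].
  by apply/setP => i; rewrite !inE; case: S; case: (f i).
by rewrite cardsC card_ord.
Qed.

Lemma cnt_le f X : cnt f X <= n.
Proof. by have := cnt_other f X; lia. Qed.

Lemma cnt_gt0 f i X : f i = X -> 0 < cnt f X.
Proof. by move=> fi; apply/card_gt0P; exists i; rewrite inE fi. Qed.

Lemma comm_sizeE f i X : f i = X -> comm_size f i = cnt f X.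
Proof. by rewrite /comm_size /cnt => ->. Qed.

Lemma prefersE pref f g i X Y : f i = X -> g i = Y ->
  prefers pref i f g = pref i (X, cnt f X) (Y, cnt g Y).
Proof. by move=> fi gi; rewrite /prefers /point (comm_sizeE fi) (comm_sizeE gi) fi gi. Qed.

Lemma leq_cnt f g X : (forall i, f i = X -> g i = X) -> cnt f X <= cnt g X.
Proof.
by move=> fg; apply/subset_leq_card/subsetP => i; rewrite !inE => /eqP /fg ->.
Qed.

Lemma cnt_leU f g X D : (forall i, f i = X -> g i = X \/ i \in D) ->
  cnt f X <= cnt g X + #|D|.
Proof.
move=> fgD; apply: leq_trans (leq_card_setU _ _); apply/subset_leq_card/subsetP => i.
by rewrite !inE => /eqP /fgD [->|->]; rewrite ?eqxx ?orbT.
Qed.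

Lemma cnt_geU f g X D : (forall i, g i = X -> f i = X) ->
  (forall i, i \in D -> g i != X /\ f i = X) -> cnt g X + #|D| <= cnt f X.
Proof.
move=> gf Df; have : [disjoint [set i | g i == X] & D].
  by rewrite disjoints_subset; apply/subsetP => i; rewrite !inE; apply: contraL => /Df [].
rewrite -(leq_card_setU _ _).2 => /eqP <-.
by apply/subset_leq_card/subsetP => i; rewrite !inE => /orP [/eqP /gf | /Df [_]] ->.
Qed.

End Counting.

Section Algorithm.
Variables (n : nat) (pref : 'I_n -> rel (alt * nat)) (S : alt).
Implicit Type f : assignment n.

Lemma cand_S f j i : i \in cand pref S f j -> f i = S.
Proof. by rewrite inE => /andP [/eqP]. Qed.

Lemma kmax_spec f : kmax pref S f != 0 ->
  [/\ 0 < kmax pref S f, kmax pref S f <= cnt f S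
    & kmax pref S f <= #|cand pref S f (kmax pref S f)|].
Proof.
rewrite /kmax; set P := fun j : 'I_(cnt f S).+1 => (0 < j) && (j <= #|cand pref S f j|).
case: (pickP P) => [j0 Pj0 _ | P0]; last by rewrite big_pred0 ?eqxx.
rewrite (bigmax_eq_arg j0 Pj0); case: arg_maxnP => // j /andP [j_gt0 j_cand] _.
by split; rewrite // -ltnS ltn_ord.
Qed.

Lemma leq_kmax f j : 0 < j <= cnt f S -> j <= #|cand pref S f j| -> j <= kmax pref S f.
Proof.
move=> /andP [j_gt0 j_le] j_cand; have j_lt : j < (cnt f S).+1 by [].
exact: (leq_bigmax_cond (Ordinal j_lt) (F := fun i : 'I__ => nat_of_ord i)) (introT andP _).
Qed.

Lemma stepE f i : kmax pref S f != 0 ->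
  step pref S f i = if i \in cand pref S f (kmax pref S f) then other S else f i.
Proof. by rewrite /step => /negbTE ->; rewrite ffunE. Qed.

Lemma step_kmax0 f : kmax pref S f = 0 -> step pref S f = f.
Proof. by rewrite /step => ->. Qed.

Lemma cnt_step f : kmax pref S f != 0 ->
  cnt f (other S) + #|cand pref S f (kmax pref S f)| <= cnt (step pref S f) (other S).
Proof.
move=> k_neq0; apply: cnt_geU => i; rewrite stepE //.
  by case: ifP => // /cand_S ->; rewrite other_neq.
by move=> iX; rewrite iX (cand_S iX) eq_sym other_neq.
Qed.

Lemma R_ind (P : assignment n -> Prop) :
  P [ffun => S] -> (forall f, P f -> P (step pref S f)) -> P (R pref S).
Proof. by move=> P0 Pstep; rewrite /R; elim: n.+1 => //= m IH; apply: Pstep. Qed.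

Lemma kmax_R : kmax pref S (R pref S) = 0.
Proof.
suff [] : kmax pref S (R pref S) = 0 \/ cnt (R pref S) S + n.+1 <= n by lia.
rewrite /R; elim: n.+1 => [|m IH]; first by right; rewrite addn0 cnt_le.
rewrite iterS; set f := iter m _ _ in IH *.
have [k0|k_neq0] := eqVneq (kmax pref S f) 0; first by left; rewrite step_kmax0.
right; case: IH => [k0|IH]; first by rewrite k0 eqxx in k_neq0.
have [k_gt0 _ k_cand] := kmax_spec k_neq0; have := cnt_step k_neq0.
have := cnt_other (step pref S f) S; have := cnt_other f S; lia.
Qed.

End Algorithm.

Definition deviation n (pref : 'I_n -> rel (alt * nat)) (f f' : assignment n) : Prop :=
  forall i, f' i != f i -> prefers pref i f' f.

Lemma stableP n (pref : 'I_n -> rel (alt * nat)) (f : assignment n) :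
  stable pref f <-> forall f', deviation pref f f' -> f' = f.
Proof.
split=> [st f' dev | dev_eq [f' [neq dev]]]; last by rewrite (dev_eq f' dev) eqxx in neq.
by have [//|neq] := eqVneq f' f; case: st; exists f'.
Qed.

Section Stability.
Variables (n : nat) (pref : 'I_n -> rel (alt * nat)) (S : alt).
Hypotheses (pref_order : forall i, strict_total_order n (pref i))
           (pref_mono : forall i, monotonic n (pref i)).

(* [th v] is the size of the [S]-community that [v] left. *)
Definition return_deterred (g : assignment n) (th : 'I_n -> nat) : Prop :=
  forall v, g v = other S ->
  [/\ 0 < th v <= n, pref v (other S, cnt g (other S)) (S, th v)
    & #|[set w | (g w == other S) && (th w <= th v)]| + cnt g S <= th v].

Lemma return_deterred_gt g th v :
  return_deterred g th -> g v = other S -> cnt g S < th v.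
Proof.
move=> hth gv; have [_ _] := hth v gv.
suff : 0 < #|[set w | (g w == other S) && (th w <= th v)]| by lia.
by apply/card_gt0P; exists v; rewrite inE gv eqxx leqnn.
Qed.

Lemma return_deterred_step g th : return_deterred g th ->
  exists th', return_deterred (step pref S g) th'.
Proof.
move=> hth; have [k0|k_neq0] := eqVneq (kmax pref S g) 0.
  by exists th; rewrite step_kmax0.
have [k_gt0 _ k_cand] := kmax_spec k_neq0; have g'_other := cnt_step k_neq0.
set k := kmax pref S g in k_gt0 k_cand g'_other k_neq0.
set X := cand pref S g k in k_cand g'_other.
set g' := step pref S g in g'_other *.
have g'E w : g' w = if w \in X then other S else g w by exact: stepE.
have X_pref w : w \in X -> pref w (other S, cnt g (other S) + k) (S, cnt g S).
  by rewrite inE => /andP [].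
have X_le : #|X| <= cnt g S.
  by apply/subset_leq_card/subsetP => w /cand_S gw; rewrite inE gw.
have X_room : #|X| + cnt g' S <= cnt g S.
  by have := cnt_other g S; have := cnt_other g' S; lia.
have g_S_le := cnt_le g S; have g'_other_le := cnt_le g' (other S).
clearbody g' X.
exists (fun w => if w \in X then cnt g S else th w) => v; rewrite g'E.
case: ifP => vX.
- move=> _; split; first by lia.
    by apply: (pref_monoL (pref_order v) (pref_mono v) _ _ _ (X_pref v vX)) => /=; lia.
  suff : [set w | (g' w == other S) &&
           ((if w \in X then cnt g S else th w) <= cnt g S)] \subset X.
    by move/subset_leq_card => C_le; apply: leq_trans X_room; rewrite leq_add2r.
  apply/subsetP => w; rewrite inE g'E; case: ifP => // _ /andP [/eqP gw].
  by rewrite leqNgt (return_deterred_gt hth gw).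
- move=> gv; have [th_v pref_v count_v] := hth v gv; split => //.
    have g_other_gt0 := cnt_gt0 gv.
    by apply: (pref_monoL (pref_order v) (pref_mono v) _ _ _ pref_v) => /=; lia.
  suff : [set w | (g' w == other S) && ((if w \in X then cnt g S else th w) <= th v)]
           \subset [set w | (g w == other S) && (th w <= th v)] :|: X.
    move/subset_leq_card/leq_trans/(_ (leq_card_setU _ _)) => C_le.
    apply: leq_trans count_v; apply: leq_trans (leq_add C_le (leqnn _)) _.
    by rewrite -addnA leq_add2l.
  apply/subsetP => w; rewrite !inE g'E.
  by case: ifP => wX; rewrite ?orbT ?orbF.
Qed.

Lemma R_return_deterred : exists th, return_deterred (R pref S) th.
Proof.
apply: (R_ind (P := fun g => exists th, return_deterred g th)) => [|g [th hth]].
  by exists (fun _ => 0) => v; rewrite ffunE => /eqP; rewrite eq_sym other_neq.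
exact: return_deterred_step hth.
Qed.

Lemma deviation_stays_other g th f : return_deterred g th -> deviation pref g f ->
  forall v, g v = other S -> f v = other S.
Proof.
move=> hth dev v0 gv0; apply/eqP; apply: contraT => f_v0.
pose P w := (g w == other S) && (f w != other S).
have P_v0 : P v0 by rewrite /P gv0 eqxx.
case: (@arg_maxnP _ v0 P th P_v0) => v /andP [/eqP gv f_v] v_max.
have fv : f v = S by case: (alt_or_other S (f v)) f_v => ->; rewrite ?eqxx.
have pref_f : pref v (S, cnt f S) (other S, cnt g (other S)).
  by rewrite -(prefersE _ fv gv); apply: dev; rewrite fv gv eq_sym other_neq.
have [th_v pref_g count_v] := hth v gv.
have f_S : cnt f S <= th v.
  apply: leq_trans count_v; rewrite addnC; apply: cnt_leU => w fw.
  case: (alt_or_other S (g w)) => gw; [by left | right].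
  rewrite inE gw eqxx /=; apply: v_max.
  by rewrite /P gw fw eqxx eq_sym other_neq.
have f_dom : 0 < cnt f S <= n by rewrite (cnt_gt0 fv) cnt_le.
have g_dom : 0 < cnt g (other S) <= n by rewrite (cnt_gt0 gv) cnt_le.
have pref_g' : pref v (other S, cnt g (other S)) (S, cnt f S).
  by apply: (pref_monoR (pref_order v) (pref_mono v) _ _ _ pref_g) => /=; lia.
have := pref_asym (x := (S, _)) (y := (other S, _)) (pref_order v) f_dom g_dom pref_f.
by rewrite pref_g'.
Qed.

Lemma deviation_trivial g th f : return_deterred g th -> kmax pref S g = 0 ->
  deviation pref g f -> f = g.
Proof.
move=> hth g_final dev.
have moved w : f w != g w -> g w = S /\ f w = other S.
  case: (alt_or_other S (g w)) => gw fw.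
    by split=> //; case: (alt_or_other S (f w)) fw => ->; rewrite ?gw ?eqxx.
  by rewrite gw (deviation_stays_other hth dev gw) eqxx in fw.
set D : {set 'I_n} := [set w | f w != g w].
have inD w : (w \in D) = (f w != g w) by rewrite inE.
clearbody D.
apply/ffunP => w; apply/eqP; apply: contraT => fw.
have D_gt0 : 0 < #|D| by apply/card_gt0P; exists w; rewrite inD.
have D_le : #|D| <= cnt g S.
  by apply/subset_leq_card/subsetP => w'; rewrite inD inE => /moved [-> _].
suff : #|D| <= kmax pref S g by rewrite g_final leqNgt D_gt0.
apply: leq_kmax; first by rewrite D_gt0.
apply/subset_leq_card/subsetP => w'; rewrite inD inE => /[dup] w'D /moved [gw' fw'].
rewrite gw' eqxx /=.
have f_other : cnt f (other S) <= cnt g (other S) + #|D|.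
  apply: cnt_leU => u fu; case: (alt_or_other S (g u)) => gu; last by left.
  by right; rewrite inD fu gu other_neq.
have pref_w' := dev w' w'D; rewrite (prefersE _ fw' gw') in pref_w'.
apply: (pref_monoL (pref_order w') (pref_mono w') _ _ _ pref_w') => /=.
- by rewrite (cnt_gt0 fw'); exact: f_other.
- by apply: leq_trans (leq_add (leqnn _) D_le) _; rewrite addnC cnt_other.
- by rewrite (cnt_gt0 gw') cnt_le.
Qed.

Lemma R_stable : stable pref (R pref S).
Proof.
have [th hth] := R_return_deterred.
by apply/stableP => f; apply: deviation_trivial hth (kmax_R pref S).
Qed.

Lemma step_other_sub (f g : assignment n) : stable pref f ->
  (forall i, g i = other S -> f i = other S) ->
  forall i, step pref S g i = other S -> f i = other S.
Proof.
move=> f_st g_f i; have [k0|k_neq0] := eqVneq (kmax pref S g) 0.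
  by rewrite step_kmax0 //; apply: g_f.
rewrite stepE //; case: ifP => [iX _|_]; last exact: g_f.
have [k_gt0 _ k_cand] := kmax_spec k_neq0.
set k := kmax pref S g in iX k_gt0 k_cand.
set X : {set 'I_n} := cand pref S g k in iX k_cand.
case: (alt_or_other S (f i)) => // fi; exfalso.
pose f' : assignment n := [ffun j => if (j \in X) && (f j == S) then other S else f j].
suff : f' = f by move/ffunP/(_ i); rewrite ffunE iX fi eqxx => /eqP; rewrite other_neq.
apply: (iffLR (stableP _ _) f_st) => j; rewrite ffunE.
case: ifP => [/andP [jX /eqP fj] _ | _]; last by rewrite eqxx.
have f'j : f' j = other S by rewrite ffunE jX fj eqxx.
rewrite (prefersE _ f'j fj).
have := jX; rewrite inE => /andP [/eqP gj pref_j].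
have f_S : cnt f S <= cnt g S.
  apply: leq_cnt => w fw; case: (alt_or_other S (g w)) => // /g_f.
  by rewrite fw => /eqP; rewrite eq_sym other_neq.
have f'_other : cnt g (other S) + #|X| <= cnt f' (other S).
  apply: cnt_geU => w; first by move=> /g_f fw; rewrite ffunE fw; case: ifP.
  move=> wX; rewrite (cand_S wX) eq_sym other_neq ffunE wX /=; split=> //.
  by case: (alt_or_other S (f w)) => ->; rewrite ?eqxx ?other_neq.
apply: (pref_monoR (pref_order j) (pref_mono j) _ _ _
          (pref_monoL (pref_order j) (pref_mono j) _ _ _ pref_j)) => /=.
- by rewrite (cnt_gt0 fj) f_S.
- exact: cnt_le.
- by rewrite (cnt_gt0 f'j) cnt_le.
- by rewrite addn_gt0 k_gt0 orbT; apply: leq_trans f'_other; rewrite leq_add2l.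
- exact: cnt_le.
- by rewrite (cnt_gt0 gj) cnt_le.
Qed.

Lemma R_other_sub (f : assignment n) : stable pref f ->
  forall i, R pref S i = other S -> f i = other S.
Proof.
move=> f_st; apply: (R_ind (P := fun g => forall i, g i = other S -> f i = other S)).
  by move=> i; rewrite ffunE => /eqP; rewrite eq_sym other_neq.
by move=> g; apply: step_other_sub.
Qed.

End Stability.

Theorem theorem2 (n : nat) (pref : 'I_n -> rel (alt * nat)) :
  (forall i, strict_total_order n (pref i)) ->
  (forall i, monotonic n (pref i)) ->
  (R pref A = R pref B <-> exists! f : assignment n, stable pref f).
Proof.
move=> pref_order pref_mono; split=> [RAB | [f [_ f_uniq]]].
  exists (R pref A); split; first exact: R_stable.
  move=> f f_st; apply/ffunP => i.
  have R_sub S : R pref S i = other S -> f i = other S by apply: R_other_sub.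
  case: (alt_or_other A (R pref A i)) => RAi; rewrite RAi.
    by rewrite (R_sub B) // -RAB RAi.
  by rewrite (R_sub A).
by rewrite -(f_uniq _ (R_stable pref_order pref_mono (S := A)))
           -(f_uniq _ (R_stable pref_order pref_mono (S := B))).
Qed.
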